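(* The poset $(P;\leq)$ defined below is not representable.
   Context: Let $P=\{p\}\cup\{p_{i_0,\ldots,i_n}: 0\le n<\omega,\ i_0,\ldots,i_n\in\omega\}$ (all these symbols distinct). Let $\le$ be the reflexive–transitive closure of the following strict relations: (0) for all $0\le j<i<\omega$: $p<p_i<p_j$; (E) for all $r\ge 0$, all $i_0,\ldots,i_{2r}\in\omega$, all $k\le i_{2r}$ and all $i<j<\omega$: $p_{i_0,\ldots,i_{2r},i}<p_{i_0,\ldots,i_{2r},j}<p_{i_0,\ldots,i_{2r-1},k}$ (for $r=0$ the last element is $p_k$); (O) for all $r\ge0$, all $i_0,\ldots,i_{2r+1}\in\omega$, all $k\le i_{2r+1}$ and all $j<i<\omega$: $p_{i_0,\ldots,i_{2r},k}<p_{i_0,\ldots,i_{2r+1},i}<p_{i_0,\ldots,i_{2r+1},j}$. This $\le$ is a partial order. A poset is representable if it is order-isomorphic to the poset of prime ideals (ordered by inclusion) of a bounded distributive lattice, equivalently iff there is a topology $\tau$ on it which is compact and such that whenever $x\not\ge y$ there is a clopen down-set containing $x$ but not $y$. *)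

From HB Require Import structures.
From mathcomp Require Import all_boot all_order.
From Stdlib Require Import Relation_Operators.
Set Implicit Arguments. Unset Strict Implicit. Unset Printing Implicit Defensive.

(** The carrier of the poset P: the point p, and the points p_{i_0,...,i_n}.
    [Pn i0 s] stands for p_{i0, s_0, ..., s_{m-1}}. *)
Inductive Pt : Type :=
| Pp : Pt
| Pn : nat -> seq nat -> Pt.

(** [pp t i] is the point p_{t, i}, i.e. p_{t_0,...,t_{m-1}, i}
    (for t = [::] this is p_i). Every p_{i_0..i_n} is [pp [:: i_0..i_{n-1}] i_n]. *)
Definition pp (t : seq nat) (i : nat) : Pt :=
  match t with
  | [::] => Pn i [::]
  | x :: s => Pn x (rcons s i)
  end.

(** The generating strict relations (0), (E), (O).  In (E) and (O) the
    tuple (i_0,...,i_m) is written [rcons u l], so [l] is its last entry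
    and [u] the tuple with the last entry removed. *)
Inductive gen : Pt -> Pt -> Prop :=
| gen0a (i : nat) : gen Pp (pp [::] i)
| gen0b (i j : nat) : j < i -> gen (pp [::] i) (pp [::] j)
(* (E): tuple (i_0,...,i_{2r}) = rcons u l of odd length, i.e. size u even *)
| genE1 (u : seq nat) (l i j : nat) :
    ~~ odd (size u) -> i < j -> gen (pp (rcons u l) i) (pp (rcons u l) j)
| genE2 (u : seq nat) (l k j : nat) :
    ~~ odd (size u) -> k <= l -> gen (pp (rcons u l) j) (pp u k)
(* (O): tuple (i_0,...,i_{2r+1}) = rcons u l of even length, i.e. size u odd *)
| genO1 (u : seq nat) (l k i : nat) :
    odd (size u) -> k <= l -> gen (pp u k) (pp (rcons u l) i)
| genO2 (u : seq nat) (l i j : nat) :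
    odd (size u) -> j < i -> gen (pp (rcons u l) i) (pp (rcons u l) j).

Definition Ple : Pt -> Pt -> Prop := clos_refl_trans Pt gen.

Local Open Scope order_scope.

Definition prime_ideal {d : Order.disp_t} {L : tbDistrLatticeType d}
  (I : L -> Prop) : Prop :=
  [/\ (forall x y : L, I y -> x <= y -> I x),
      I \bot,
      (forall x y : L, I x -> I y -> I (x `|` y)),
      ~ I \top
    & (forall x y : L, I (x `&` y) -> I x \/ I y)].

Definition representable (T : Type) (le : T -> T -> Prop) : Prop :=
  exists (d : Order.disp_t) (L : tbDistrLatticeType d) (f : T -> L -> Prop),
    [/\ (forall x, prime_ideal (f x)),
        (forall I : L -> Prop, prime_ideal I -> exists x, forall a, I a <-> f x a)
      & (forall x y, le x y <-> (forall a, f x a -> f y a))].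

From mathcomp Require Import all_boot all_order.
From mathcomp Require Import zify boolp classical_sets filter.
From Stdlib Require Import Relation_Operators Lia.

(* Write p_{v,i} for the point with coordinates v ++ [i].
   For v of even length the children p_{v,i,j} increase with j and their
   supremum in P is p_{v,i}; for v of odd length they decrease and their
   infimum is p_{v,i}; consecutive children are distinct.  These facts follow
   from an explicit description of the up-set (resp. down-set) of a child,
   the [cone], checked generator by generator.

   Suppose x |-> f x is an order-isomorphism from P onto
   the prime ideals of a bounded distributive lattice L, and fix a
   non-principal ultrafilter U on nat.  The U-limit of a sequence of prime
   ideals is prime, hence is f z for some point z; applied to the children of
   p_{v,i}, this shows that f preserves the suprema and infima above.  So a
   basic condition "a in f x, b not in f x" satisfied by x = p_{v,i} is
   satisfied by almost all children of x, and since two children have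
   different ideals one of them can be further constrained to exclude any
   given point q.  Enumerating P (which is countable) we build a sequence of
   ever stronger conditions excluding every point in turn; the U-limit z of
   the corresponding points satisfies all of them, so it excludes itself. *)

Set Implicit Arguments.
Unset Strict Implicit.
Unset Printing Implicit Defensive.

Import Order.LTheory.

Definition coords (x : Pt) : seq nat :=
  match x with Pp => [::] | Pn a s => a :: s end.

Lemma coords_p : coords Pp = [::].
Proof. by []. Qed.

Lemma coords_pp t i : coords (pp t i) = rcons t i.
Proof. by case: t. Qed.

Lemma coords_inj : injective coords.
Proof. by case=> [|a s] [|b r] //= [-> ->]. Qed.

Lemma Ple_gen x y : gen x y -> Ple x y.
Proof. exact: rt_step. Qed.

Lemma Ple_refl x : Ple x x.
Proof. exact: rt_refl. Qed.

Lemma Ple_trans y x z : Ple x y -> Ple y z -> Ple x z.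
Proof. exact: rt_trans. Qed.

Lemma Ple_upclosed (S : Pt -> Prop) x y :
  (forall a b, gen a b -> S a -> S b) -> S x -> Ple x y -> S y.
Proof. by move=> Sgen Sx Pxy; elim: Pxy Sx => // a b c _ IHab _ IHbc /IHab. Qed.

Lemma Ple_downclosed (S : Pt -> Prop) x y :
  (forall a b, gen a b -> S b -> S a) -> S y -> Ple x y -> S x.
Proof. by move=> Sgen Sy Pxy; elim: Pxy Sy => // a b c _ IHab _ IHbc /IHbc. Qed.

Lemma siblings_up v : odd (size v) -> {homo pp v : k l / k <= l >-> Ple k l}.
Proof.
case/lastP: v => [//|u x]; rewrite size_rcons /= => hu.
apply: (homo_leq (f := pp (rcons u x)) Ple_refl Ple_trans) => n.
exact/Ple_gen/genE1.
Qed.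

Lemma siblings_down v : ~~ odd (size v) -> {homo pp v : k l / k <= l >-> Ple l k}.
Proof.
move=> hv; apply: (homo_leq (f := pp v) (r := fun a b => Ple b a)) => [x|y x z hyx hzy|n].
- exact: Ple_refl.
- exact: Ple_trans hzy hyx.
case/lastP: v hv => [_|u x]; first exact/Ple_gen/gen0b.
by rewrite size_rcons /= negbK => hu; apply/Ple_gen/genO2.
Qed.

Lemma child_below v i j : ~~ odd (size v) -> Ple (pp (rcons v i) j) (pp v i).
Proof. by move=> hv; apply/Ple_gen/genE2. Qed.

Lemma child_above v i j : odd (size v) -> Ple (pp v i) (pp (rcons v i) j).
Proof. by move=> hv; apply/Ple_gen/genO1. Qed.

(* The region of P that is reachable from p_{v,i,j} by going up when v has
   even length, or by going down when v has odd length: later (resp. earlier)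
   siblings p_{v,i,k}, k >= j, their children, and the points p_{v,k}, k <= i. *)
Definition cone v i j z :=
  (exists k, j <= k /\ coords z = rcons (rcons v i) k) \/
  (exists k m, j <= k /\ coords z = rcons (rcons (rcons v i) k) m) \/
  (exists k, k <= i /\ coords z = rcons v k).

Lemma rcons_neq_nil (s : seq nat) x : rcons s x <> [::].
Proof. by case: s. Qed.

Lemma rcons_neq_self (s : seq nat) x : rcons s x <> s.
Proof. by move/(congr1 size); rewrite size_rcons; lia. Qed.

Lemma rcons2_neq_self (s : seq nat) x y : rcons (rcons s x) y <> s.
Proof. by move/(congr1 size); rewrite !size_rcons; lia. Qed.

Ltac solve_rcons_eqs :=
  repeat match goal with
  | H : rcons _ _ = [::] |- _ => by case: (rcons_neq_nil H)
  | H : [::] = rcons _ _ |- _ => by case: (rcons_neq_nil (esym H))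
  | H : rcons ?s _ = ?s |- _ => by case: (rcons_neq_self H)
  | H : ?s = rcons ?s _ |- _ => by case: (rcons_neq_self (esym H))
  | H : rcons (rcons ?s _) _ = ?s |- _ => by case: (rcons2_neq_self H)
  | H : ?s = rcons (rcons ?s _) _ |- _ => by case: (rcons2_neq_self (esym H))
  | H : rcons _ _ = rcons _ _ |- _ => case/rcons_inj: H; intros
  | H : ?x = ?y |- _ => (subst x || subst y)
  end.

Ltac solve_cone :=
  first [ by left; eexists; split; [|reflexivity]; lia
        | by right; left; do 2 eexists; split; [|reflexivity]; lia
        | by right; right; eexists; split; [|reflexivity]; lia ].

Lemma cone_gen v i j a b : gen a b ->
  (~~ odd (size v) -> cone v i j a -> cone v i j b) /\
  (odd (size v) -> cone v i j b -> cone v i j a).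
Proof.
case=> [i0 | i0 j0 lt | u l i0 j0 hu lt | u l k0 j0 hu le | u l k0 i0 hu le
       | u l i0 j0 hu lt]; split=> hv; rewrite /cone ?coords_pp;
  case=> [[k [hk E]] | [[k [m [hk E]]] | [k [hk E]]]];
  rewrite ?coords_pp ?coords_p in E; solve_rcons_eqs.
all: try (move: hv hu; rewrite ?size_rcons /= ?negbK; by case: (odd _)).
all: try (move: hv; rewrite ?size_rcons /= ?negbK; by case: (odd _)).
all: solve_cone.
Qed.

Lemma cone_up v i j z : ~~ odd (size v) -> Ple (pp (rcons v i) j) z -> cone v i j z.
Proof.
move=> hv; apply: Ple_upclosed; last by left; exists j; rewrite coords_pp.
by move=> a b /(cone_gen v i j) [/(_ hv)].
Qed.

Lemma cone_down v i j z : odd (size v) -> Ple z (pp (rcons v i) j) -> cone v i j z.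
Proof.
move=> hv; apply: Ple_downclosed; last by left; exists j; rewrite coords_pp.
by move=> a b /(cone_gen v i j) [_ /(_ hv)].
Qed.

Lemma cones_meet v i z : (forall j, cone v i j z) -> exists2 k, k <= i & z = pp v k.
Proof.
move=> Hz; case: (Hz 0) => [[k [_ E]] | [[k [m [_ E]]] | [k [hk E]]]].
- by case: (Hz k.+1) => [[k' [? E']] | [[k' [m' [_ E']]] | [k' [_ E']]]];
    rewrite E' in E; solve_rcons_eqs; lia.
- by case: (Hz k.+1) => [[k' [_ E']] | [[k' [m' [? E']]] | [k' [_ E']]]];
    rewrite E' in E; solve_rcons_eqs; lia.
- by exists k => //; apply: coords_inj; rewrite coords_pp.
Qed.

Lemma children_sup v i z :
  ~~ odd (size v) -> (forall j, Ple (pp (rcons v i) j) z) -> Ple (pp v i) z.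
Proof.
move=> hv Hz; have [k hk ->] := cones_meet (fun j => cone_up hv (Hz j)).
exact: siblings_down.
Qed.

Lemma children_inf v i z :
  odd (size v) -> (forall j, Ple z (pp (rcons v i) j)) -> Ple z (pp v i).
Proof.
move=> hv Hz; have [k hk ->] := cones_meet (fun j => cone_down hv (Hz j)).
exact: siblings_up.
Qed.

Lemma children_distinct v i j :
  Ple (pp (rcons v i) j) (pp (rcons v i) j.+1) ->
  Ple (pp (rcons v i) j.+1) (pp (rcons v i) j) -> False.
Proof.
move=> Hup Hdown; have : cone v i j.+1 (pp (rcons v i) j).
  by case hv: (odd (size v)); [exact: cone_down | apply: cone_up; rewrite ?hv].
rewrite /cone coords_pp.
by case=> [[k [? E]] | [[k [m [_ E]]] | [k [_ E]]]]; solve_rcons_eqs; lia.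
Qed.

Section PrimeIdeals.
Context {disp : Order.disp_t} {L : tbDistrLatticeType disp}.
Implicit Types (I : L -> Prop) (x y : L).
Local Open Scope order_scope.

Lemma ideal_down I x y : prime_ideal I -> I y -> x <= y -> I x.
Proof. by case=> down _ _ _ _; apply: down. Qed.

Lemma ideal_bot I : prime_ideal I -> I \bot.
Proof. by case. Qed.

Lemma ideal_join I x y : prime_ideal I -> I x -> I y -> I (x `|` y).
Proof. by case=> _ _ join _ _; apply: join. Qed.

Lemma ideal_top I : prime_ideal I -> ~ I \top.
Proof. by case. Qed.

Lemma ideal_prime I x y : prime_ideal I -> I (x `&` y) -> I x \/ I y.
Proof. by case=> _ _ _ _ prime; apply: prime. Qed.

Lemma ideal_meet I x y : prime_ideal I -> ~ I x -> ~ I y -> ~ I (x `&` y).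
Proof. by move=> pI nx ny /(ideal_prime pI) []. Qed.

Lemma prime_ideal_ultralimit (T : Type) (U : set_system T) (I : T -> L -> Prop) :
  UltraFilter U -> (forall t, prime_ideal (I t)) ->
  prime_ideal (fun x => U [set t | I t x]%classic).
Proof.
move=> Uultra pI; split.
- move=> x y Uy xy; apply: filterS Uy => t Iy.
  exact: ideal_down (pI t) Iy xy.
- by apply: filterS filterT => t _; apply: ideal_bot.
- move=> x y Ux Uy; apply: filterS (filterI Ux Uy) => t [Ix Iy].
  exact: ideal_join.
- move=> Utop; apply: (filter_not_empty U); apply: filterS Utop => t.
  exact: ideal_top.
- move=> x y Uxy; have [Ux|Unx] := in_ultra_setVsetC [set t | I t x]%classic Uultra.
    by left.
  right; apply: filterS (filterI Uxy Unx) => t [Ixy nIx].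
  by case: (ideal_prime (pI t) Ixy).
Qed.

End PrimeIdeals.

Definition enum_pt (n : nat) : Pt :=
  if unpickle n is Some (Some (a, s)) then Pn a s else Pp.

Lemma enum_pt_onto q : exists k, enum_pt k = q.
Proof.
exists (pickle (if q is Pn a s then Some (a, s) else None)).
by rewrite /enum_pt pickleK; case: q.
Qed.

Section Representation.
Context {disp : Order.disp_t} {L : tbDistrLatticeType disp} (f : Pt -> L -> Prop).
Hypothesis f_prime : forall x, prime_ideal (f x).
Hypothesis f_onto : forall I, prime_ideal I -> exists x, forall a, I a <-> f x a.
Hypothesis f_order : forall x y, Ple x y <-> (forall a, f x a -> f y a).
Variable U : set_system nat.
Hypothesis U_ultra : UltraFilter U.
Hypothesis U_cofinite : (\oo `<=` U)%classic.
Local Open Scope order_scope.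

Lemma f_mono x y a : Ple x y -> f x a -> f y a.
Proof. by move/f_order; apply. Qed.

Lemma f_reflect x y : (forall a, f x a -> f y a) -> Ple x y.
Proof. by move/f_order. Qed.

Lemma U_eventually (P : nat -> Prop) N :
  (forall n, (N <= n)%N -> P n) -> U [set n | P n]%classic.
Proof. by move=> HP; apply: U_cofinite; exists N. Qed.

Lemma U_frequently (P : nat -> Prop) N :
  U [set n | P n]%classic -> exists2 n, (N <= n)%N & P n.
Proof.
move=> UP; have UN : U [set n | (N <= n)%N]%classic by apply: U_cofinite; exists N.
by have [n [Nn Pn]] := filter_ex (filterI UN UP); exists n.
Qed.

Lemma ultralimit_point (g : nat -> Pt) :
  exists z, forall a, U [set n | f (g n) a]%classic <-> f z a.
Proof. exact/f_onto/prime_ideal_ultralimit. Qed.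

(* For v of even length, an element of the ideal of p_{v,i} eventually lies
   in the ideals of its children: suprema of chains are preserved. *)
Lemma children_sup_ideal v i a : ~~ odd (size v) -> f (pp v i) a ->
  exists j0, forall j, (j0 <= j)%N -> f (pp (rcons v i) j) a.
Proof.
move=> hv ha; set g := pp (rcons v i).
have g_up : {homo g : j k / (j <= k)%N >-> Ple j k}.
  by apply: siblings_up; rewrite size_rcons /=.
have [z hz] := ultralimit_point g.
have gz j : Ple (g j) z.
  apply: f_reflect => c gc; apply/hz; apply: (U_eventually (N := j)) => n jn.
  exact: f_mono (g_up _ _ jn) gc.
have [n _ gna] := U_frequently 0 ((hz a).2 (f_mono (children_sup hv gz) ha)).
by exists n => j nj; apply: f_mono (g_up _ _ nj) gna.
Qed.

Lemma children_inf_ideal v i a : odd (size v) -> ~ f (pp v i) a ->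
  exists j0, forall j, (j0 <= j)%N -> ~ f (pp (rcons v i) j) a.
Proof.
move=> hv hna; set g := pp (rcons v i).
have g_down : {homo g : j k / (j <= k)%N >-> Ple k j}.
  by apply: siblings_down; rewrite size_rcons /= hv.
have [z hz] := ultralimit_point g.
have zg j : Ple z (g j).
  apply: f_reflect => c /hz /(U_frequently j) [n jn gnc].
  exact: f_mono (g_down _ _ jn) gnc.
have [n gn] : exists n, ~ f (g n) a.
  apply: contrapT => none; apply/hna/(f_mono (children_inf hv zg))/hz.
  by apply: (U_eventually (N := 0)) => n _; apply: contrapT => gna; apply: none; exists n.
by exists n => j nj gj; apply/gn/(f_mono (g_down _ _ nj) gj).
Qed.

(* A state of the diagonal construction: a point p_{v,i} together with two
   lattice elements, the first required inside and the second outside the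
   ideal of the point (a basic open set of the patch topology). *)
Record state := State { st_v : seq nat; st_i : nat; st_in : L; st_out : L }.

Definition st_point (s : state) : Pt := pp (st_v s) (st_i s).

Definition valid (s : state) : Prop :=
  f (st_point s) (st_in s) /\ ~ f (st_point s) (st_out s).

Definition refines (s s' : state) : Prop :=
  st_in s <= st_in s' /\ st_out s' <= st_out s.

Definition excludes (q : Pt) (s : state) : Prop :=
  ~ f q (st_in s) \/ f q (st_out s).

Lemma children_valid v i a b : valid (State v i a b) ->
  exists j0, forall j, (j0 <= j)%N -> valid (State (rcons v i) j a b).
Proof.
rewrite /valid /st_point /= => -[ha hb]; case hv: (odd (size v)).
- have [j0 Hb] := children_inf_ideal hv hb.
  by exists j0 => j /Hb; split=> //; apply: f_mono (child_above _ _ hv) ha.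
- have [j0 Ha] := children_sup_ideal (negbT hv) ha.
  exists j0 => j /Ha; split=> // hb'; apply: hb.
  by apply: f_mono hb'; apply: child_below; rewrite hv.
Qed.

(* Any valid state can be refined into a valid state excluding a given point:
   two consecutive children satisfying its conditions have distinct ideals,
   so one of them differs from the ideal of q at some element c, which is
   added to the conditions. *)
Lemma refine_step s q : valid s -> exists2 s', valid s' & refines s s' /\ excludes q s'.
Proof.
case: s => v i a b /children_valid [j0 Hj0]; set g := pp (rcons v i).
have [j [j0j [c gq]]] : exists j, (j0 <= j)%N /\ exists c, ~ (f (g j) c <-> f q c).
  apply: contrapT => same.
  have eq_q k c : (j0 <= k)%N -> f (g k) c <-> f q c.
    by move=> j0k; apply: contrapT => ne; apply: same; exists k; split=> //; exists c.
  apply: (@children_distinct v i j0); apply: f_reflect => c.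
    by move/(eq_q _ _ (leqnn _))/(eq_q _ _ (leqnSn _)).
  by move/(eq_q _ _ (leqnSn _))/(eq_q _ _ (leqnn _)).
have [ha hb] := Hj0 j j0j; case: (EM (f (g j) c)) => gc.
- have nqc : ~ f q c by move=> qc; apply: gq; split.
  exists (State (rcons v i) j (a `|` c) b); first by split=> //; apply: ideal_join.
  split; first by split; [apply: leUl | apply: lexx].
  by left=> qac; apply/nqc/(ideal_down (f_prime q) qac)/leUr.
- have qc : f q c by apply: contrapT => nqc; apply: gq; split=> [/gc []|/nqc []].
  exists (State (rcons v i) j a (b `&` c)); first by split=> //; apply: ideal_meet.
  split; first by split; [apply: lexx | apply: leIl].
  by right; apply/(ideal_down (f_prime q) qc)/leIr.
Qed.

Lemma refining_sequence : exists s : nat -> state,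
  [/\ forall n, valid (s n), forall n, refines (s n) (s n.+1)
    & forall k, excludes (enum_pt k) (s k.+1)].
Proof.
have next_ex (ks : nat * state) : exists s',
    valid ks.2 -> [/\ valid s', refines ks.2 s' & excludes (enum_pt ks.1) s'].
  case: ks => k s; case: (EM (valid s)) => [/(refine_step (enum_pt k))|invalid].
    by case=> s' ? []; exists s'.
  by exists s => /invalid.
have [next Hnext] := choice next_ex.
pose s0 := State [::] 0 \bot \top.
have s0_valid : valid s0 by split; [apply: ideal_bot | apply: ideal_top].
pose fix s n := if n is k.+1 then next (k, s k) else s0.
have s_valid n : valid (s n).
  by elim: n => // n IH; case: (Hnext (n, s n) IH).
by exists s; split=> // n; case: (Hnext (n, s n) (s_valid n)).
Qed.

Lemma refining_persist (s : nat -> state) :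
  (forall n, valid (s n)) -> (forall n, refines (s n) (s n.+1)) ->
  forall m n, (m <= n)%N ->
  f (st_point (s n)) (st_in (s m)) /\ ~ f (st_point (s n)) (st_out (s m)).
Proof.
move=> s_valid s_refines m n mn; have [hin hout] := s_valid n.
have in_up : {homo (st_in \o s) : i j / (i <= j)%N >-> i <= j}.
  by apply: homo_leq => [x|y x z|i]; [apply: lexx | apply: le_trans | case: (s_refines i)].
have out_down : {homo (st_out \o s) : i j / (i <= j)%N >-> j <= i}.
  apply: homo_leq => [x|y x z xy yz|i]; [apply: lexx | exact: le_trans yz xy |].
  by case: (s_refines i).
split; first exact: ideal_down (f_prime _) hin (in_up _ _ mn).
by move=> hm; apply/hout/(ideal_down (f_prime _) hm)/out_down.
Qed.

(* The limit point of a refining sequence excluding every point of P would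
   have to exclude itself. *)
Lemma no_representation : False.
Proof.
have [s [s_valid s_refines s_excludes]] := refining_sequence.
have persist := refining_persist s_valid s_refines.
have [z hz] := ultralimit_point (fun n => st_point (s n)).
have [k zk] := enum_pt_onto z.
rewrite -zk in hz; case: (s_excludes k) => [nin | out].
- apply/nin/hz; apply: (U_eventually (N := k.+1)) => n kn.
  exact: (persist _ _ kn).1.
- have [n kn] := U_frequently k.+1 ((hz _).2 out).
  exact: (persist _ _ kn).2.
Qed.

End Representation.

Theorem lemma2p6 : ~ representable Ple.
(* Any representation contradicts [no_representation], instantiated with an
   ultrafilter refining the cofinite filter on nat. *)
Proof.
case=> disp [L [f [f_prime f_onto f_order]]].
have [U [U_ultra U_cofinite]] := ultraFilterLemma eventually_filter.
exact: (no_representation (U := U) f_prime f_onto f_order U_ultra U_cofinite).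
Qed.
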